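(* For every integer $m\ge3$ and every $\alpha\in[0,1]$, every deterministic social choice rule that always returns a candidate whose integral domination graph admits a perfect matching has distortion exactly $2+\alpha$ on $\alpha$-decisive metric spaces.
   Context: An election: voters $V=\{1,\dots,n\}$, a fixed finite set $C$ of $m$ candidates, a profile $\sigma$ of linear orders over $C$; $a\succeq_i c$ means $a=c$ or $i$ ranks $a$ above $c$; $\mathrm{top}(i)$ is $i$'s first choice. The integral domination graph $G(a)$ is the bipartite graph with both sides copies of $V$ and edge $(i,j)$ iff $a\succeq_i\mathrm{top}(j)$; for every election some candidate has $G(a)$ admitting a perfect matching. A distance function $d$ on $V\cup C$ is nonnegative, symmetric and satisfies the triangle inequality (co-location allowed); consistent with $\sigma$ if $d(i,c)\le d(i,c')$ whenever $i$ ranks $c$ above $c'$; $\alpha$-decisive if $d(i,\mathrm{top}(i))\le\alpha\,d(i,c)$ for all $i$ and $c\ne\mathrm{top}(i)$. $\mathrm{SC}(c)=\sum_i d(i,c)$. Distortion of a deterministic rule $f$ on $\alpha$-decisive spaces: $\sup_\sigma\sup_d\mathrm{SC}(f(\sigma))/\min_c\mathrm{SC}(c)$ over $\alpha$-decisive consistent $d$. *)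

From HB Require Import structures.
From mathcomp Require Import all_boot all_order all_algebra.
From mathcomp Require Import fingroup perm.
From mathcomp Require Import reals.
Set Implicit Arguments. Unset Strict Implicit. Unset Printing Implicit Defensive.
Import Order.TTheory GRing.Theory Num.Theory.
Local Open Scope ring_scope.

(* Voters are 'I_n, candidates are 'I_m.  A profile gives, for each voter i,
   a linear order on candidates, encoded as the bijective rank function
   s i : {perm 'I_m}  (rank 0 = first choice). *)
Definition profile (n m : nat) := 'I_n -> {perm 'I_m}.

Definition ranks_above n m (s : profile n m) (i : 'I_n) (a c : 'I_m) : bool :=
  (s i a < s i c)%N.

Definition weakly_prefers n m (s : profile n m) (i : 'I_n) (a c : 'I_m) : bool :=
  (a == c) || ranks_above s i a c.

Definition is_top n m (s : profile n m) (i : 'I_n) (c : 'I_m) : bool :=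
  (nat_of_ord (s i c) == 0)%N.

Definition idg_edge n m (s : profile n m) (a : 'I_m) (i j : 'I_n) : Prop :=
  exists t, is_top s j t /\ weakly_prefers s i a t.

(* G(a) (bipartite, both sides copies of V) admits a perfect matching *)
Definition has_perfect_matching n m (s : profile n m) (a : 'I_m) : Prop :=
  exists p : {perm 'I_n}, forall i, idg_edge s a i (p i).

Definition point (n m : nat) := ('I_n + 'I_m)%type.

Definition is_distance (R : realType) n m (d : point n m -> point n m -> R) : Prop :=
  [/\ (forall x y, 0 <= d x y),
      (forall x y, d x y = d y x) &
      (forall x y z, d x z <= d x y + d y z)].

Definition consistent (R : realType) n m (s : profile n m)
    (d : point n m -> point n m -> R) : Prop :=
  forall i c c', ranks_above s i c c' -> d (inl i) (inr c) <= d (inl i) (inr c').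

Definition decisive (R : realType) (alpha : R) n m (s : profile n m)
    (d : point n m -> point n m -> R) : Prop :=
  forall i t c, is_top s i t -> c != t ->
    d (inl i) (inr t) <= alpha * d (inl i) (inr c).

Definition SC (R : realType) n m (d : point n m -> point n m -> R) (c : 'I_m) : R :=
  \sum_(i < n) d (inl i) (inr c).

Definition admissible (R : realType) (alpha : R) n m (s : profile n m)
    (d : point n m -> point n m -> R) : Prop :=
  [/\ is_distance d, consistent s d & decisive alpha s d].

Definition rule (m : nat) := forall n : nat, profile n m -> 'I_m.

(* distortion of f on alpha-decisive spaces equals D, i.e.
   sup_{n,s,d} SC(f s)/min_c SC(c) = D : upper bound (multiplicative form)
   plus approximate attainment *)
Definition distortion_eq (R : realType) m (f : rule m) (alpha D : R) : Prop :=
  (forall n (s : profile n m) (d : point n m -> point n m -> R),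
      admissible alpha s d -> forall c, SC d (f n s) <= D * SC d c) /\
  (forall eps : R, 0 < eps ->
      exists n (s : profile n m) (d : point n m -> point n m -> R),
        admissible alpha s d /\ exists c, (D - eps) * SC d c < SC d (f n s)).

From HB Require Import structures.
From mathcomp Require Import all_boot all_order all_algebra.
From mathcomp Require Import fingroup perm.
From mathcomp Require Import reals lra zify.
Set Implicit Arguments. Unset Strict Implicit. Unset Printing Implicit Defensive.
Import Order.TTheory GRing.Theory Num.Theory.
Local Open Scope ring_scope.

(** The upper bound is a voter-by-voter charging argument: if [w] has a
    perfect matching [p] in its domination graph, then [w] is weakly preferred
    by [i] to the first choice [t] of [p i], so for any candidate [c]
    [d(i,w) <= d(i,t) <= d(i,c) + d(c, p i) + d(p i, t)
             <= d(i,c) + (1 + alpha) d(p i, c)]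
    by decisiveness of [p i]; summing over [i] gives [(2 + alpha) SC(c)].

    For the lower bound take [k] voters with ballot [b > a > x] located at
    [b], one with [a > b > x] at [a], [k] with [x > a > b] at distance [1]
    from [a] and [b] and [alpha] from [x], and one with [a > x > b] at [a];
    the other candidates are far away.  The [k + 1] voters ranking [b] last
    can only be matched to the [k] voters whose first choice is [b], and
    likewise for [x], so Hall's condition forces the rule to pick [a], whose
    social cost [(2 + alpha) k] is [2 + alpha - O(1/k)] times that of [b]. *)

Section Upper.
Variables (R : realType) (alpha : R) (n m : nat) (s : profile n m).
Variable d : point n m -> point n m -> R.
Hypotheses (alpha_ge0 : 0 <= alpha) (d_adm : admissible alpha s d).

Lemma idg_edge_dist_le (w c : 'I_m) (i j : 'I_n) : idg_edge s w i j ->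
  d (inl i) (inr w) <= d (inl i) (inr c) + (1 + alpha) * d (inl j) (inr c).
Proof.
have [[d_ge0 d_sym d_tri] d_cons d_dec] := d_adm.
move=> [t [top_t w_t]].
have dw_le_dt : d (inl i) (inr w) <= d (inl i) (inr t).
  by case/orP: w_t => [/eqP -> | /d_cons].
have djc_ge0 := d_ge0 (inl j) (inr c).
have : 0 <= alpha * d (inl j) (inr c) by apply: mulr_ge0.
have [c_eq_t | c_neq_t] := eqVneq c t; first by subst t; lra.
have := d_dec j t c top_t c_neq_t.
have := d_tri (inl i) (inr c) (inr t).
have := d_tri (inr c) (inl j) (inr t).
rewrite (d_sym (inr c) (inl j)); lra.
Qed.

Lemma perfect_matching_SC_le (w : 'I_m) : has_perfect_matching s w ->
  forall c, SC d w <= (2 + alpha) * SC d c.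
Proof.
move=> [p p_edge] c; rewrite /SC.
apply: le_trans (ler_sum _ (fun i _ => idg_edge_dist_le c (p_edge i))) _.
rewrite big_split /= -mulr_sumr.
have -> : \sum_i d (inl (p i)) (inr c) = \sum_i d (inl i) (inr c).
  by rewrite [RHS](reindex_inj (@perm_inj _ p)).
lra.
Qed.

End Upper.

Definition first_choice n m (s : profile n m.+1) (j : 'I_n) : 'I_m.+1 :=
  (s j)^-1%g ord0.

Lemma is_topE n m (s : profile n m.+1) j t : is_top s j t = (t == first_choice s j).
Proof.
rewrite /is_top /first_choice -(can_eq (permK (s j))) permKV.
by rewrite -val_eqE.
Qed.

Lemma idg_edgeE n m (s : profile n m.+1) w i j :
  idg_edge s w i j <-> weakly_prefers s i w (first_choice s j).
Proof.
split=> [[t [+ w_t]] | w_top]; first by rewrite is_topE => /eqP <-.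
by exists (first_choice s j); rewrite is_topE.
Qed.

Lemma no_perfect_matching n m (s : profile n m) w a b
    (e : 'I_a -> 'I_n) (h : 'I_b -> 'I_n) :
  injective e -> (b < a)%N -> (forall i j, idg_edge s w (e i) j -> j \in codom h) ->
  ~ has_perfect_matching s w.
Proof.
move=> e_inj lt_ba e_edge [p p_edge].
have img_sub : image (p \o e) 'I_a \subset codom h.
  by apply/subsetP => _ /imageP [i _ ->]; apply: e_edge (p_edge _).
have := leq_trans (subset_leq_card img_sub) (leq_image_card h _).
by rewrite (card_image (inj_comp (@perm_inj _ p) e_inj)) !card_ord leqNgt lt_ba.
Qed.

(* Candidates [0], [1], [2] play the roles of [a], [b], [x]; [pref_rank t c] is
   the position of [c] on ballot [t], all other candidates keep their index. *)
Inductive pref_kind := PrefBAX | PrefABX | PrefXAB | PrefAXB.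

Definition pref_rank (t : pref_kind) (c : nat) : nat :=
  match t, c with
  | PrefBAX, 0 => 1 | PrefBAX, 1 => 0
  | PrefXAB, 0 => 1 | PrefXAB, 1 => 2 | PrefXAB, 2 => 0
  | PrefAXB, 1 => 2 | PrefAXB, 2 => 1
  | _, _ => c
  end.

Definition pref_top (t : pref_kind) : nat :=
  match t with PrefBAX => 1 | PrefXAB => 2 | _ => 0 end.

Lemma pref_rank_inj t : injective (pref_rank t).
Proof. by move=> u v; case: t; case: u => [|[|[|u]]]; case: v => [|[|[|v]]]. Qed.

Lemma pref_rank_ltn t m c : (c < m.+3)%N -> (pref_rank t c < m.+3)%N.
Proof. by case: t; case: c => [|[|[|c]]]. Qed.

Lemma pref_rank_eq0 t c : (pref_rank t c == 0)%N = (c == pref_top t).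
Proof. by case: t; case: c => [|[|[|c]]]. Qed.

Lemma pref_approves_top t t' w :
    (2 <= pref_rank t w)%N ->
    (w == pref_top t') || (pref_rank t w < pref_rank t (pref_top t'))%N ->
  w = pref_top t'.
Proof. by case: t; case: t' => /=; case: w => [|[|[|w]]] //= + /orP[/eqP|]; lia. Qed.

Section Profile.
Variables m k : nat.
Local Notation n := (k.+1 + k.+1)%N.

Definition pref_ord t (c : 'I_m.+3) : 'I_m.+3 := Ordinal (pref_rank_ltn t (ltn_ord c)).

Lemma pref_ord_inj t : injective (pref_ord t).
Proof. by move=> u v /(congr1 val) /pref_rank_inj /val_inj. Qed.

Definition pref_perm t : {perm 'I_m.+3} := perm (@pref_ord_inj t).

Lemma pref_permE t c : val (pref_perm t c) = pref_rank t c.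
Proof. by rewrite permE. Qed.

Definition voter_kind (i : 'I_n) : pref_kind :=
  if (i < k)%N then PrefBAX else if i == k :> nat then PrefABX
  else if (i < k.+1 + k)%N then PrefXAB else PrefAXB.

Definition hall_profile : profile n m.+3 := fun i => pref_perm (voter_kind i).

Lemma first_choice_hall_profile j :
  val (first_choice hall_profile j) = pref_top (voter_kind j).
Proof.
have := eqxx (first_choice hall_profile j).
by rewrite -is_topE /is_top pref_permE pref_rank_eq0 => /eqP.
Qed.

Lemma hall_profile_edge_top (w : 'I_m.+3) i j :
  (2 <= pref_rank (voter_kind i) w)%N -> idg_edge hall_profile w i j ->
  w = pref_top (voter_kind j) :> nat.
Proof.
move=> low_w /idg_edgeE; rewrite /weakly_prefers /ranks_above -val_eqE /=.
by rewrite !pref_permE first_choice_hall_profile; apply: pref_approves_top.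
Qed.

Lemma voter_kind_lshift (i : 'I_k.+1) :
  pref_rank (voter_kind (lshift k.+1 i)) 2 = 2.
Proof. by rewrite /voter_kind /=; have := ltn_ord i; do 3?case: ifP => //; lia. Qed.

Lemma voter_kind_rshift (i : 'I_k.+1) :
  pref_rank (voter_kind (rshift k.+1 i)) 1 = 2.
Proof. by rewrite /voter_kind /=; have := ltn_ord i; do 3?case: ifP => //; lia. Qed.

Lemma pref_top_voter_kind1 (j : 'I_n) : pref_top (voter_kind j) = 1 -> (j < k)%N.
Proof. by rewrite /voter_kind; do 3?case: ifP. Qed.

Lemma pref_top_voter_kind2 (j : 'I_n) :
  pref_top (voter_kind j) = 2 -> (k.+1 <= j < k.+1 + k)%N.
Proof. by rewrite /voter_kind; do 3?case: ifP => //; lia. Qed.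

Lemma sum_voter_kind (V : nmodType) (G : pref_kind -> V) :
  \sum_(i < n) G (voter_kind i) =
  G PrefBAX *+ k + G PrefABX + (G PrefXAB *+ k + G PrefAXB).
Proof.
rewrite big_split_ord /= !big_ord_recr /=.
congr (_ + _ + (_ + _)).
- rewrite (eq_bigr (fun=> G PrefBAX)) ?sumr_const ?card_ord // => i _.
  by rewrite /voter_kind /= ltn_ord.
- by rewrite /voter_kind /= ltnn eqxx.
- rewrite (eq_bigr (fun=> G PrefXAB)) ?sumr_const ?card_ord // => i _.
  by rewrite /voter_kind /=; have := ltn_ord i; do 3?case: ifP => //; lia.
- by rewrite /voter_kind /=; do 3?case: ifP => //; lia.
Qed.

Lemma hall_profile_nomatch_b (w : 'I_m.+3) :
  w = 1 :> nat -> ~ has_perfect_matching hall_profile w.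
Proof.
move=> w1; apply: (@no_perfect_matching _ _ _ _ _ _ (@rshift k.+1 k.+1)
  (fun l : 'I_k => lshift k.+1 (widen_ord (leqnSn k) l))) => // [|i j].
  exact: rshift_inj.
move/hall_profile_edge_top; rewrite w1 voter_kind_rshift => /(_ isT) /esym.
move/pref_top_voter_kind1 => lt_jk.
by apply/codomP; exists (Ordinal lt_jk); apply: val_inj.
Qed.

Lemma hall_profile_nomatch_x (w : 'I_m.+3) :
  w = 2 :> nat -> ~ has_perfect_matching hall_profile w.
Proof.
move=> w2; apply: (@no_perfect_matching _ _ _ _ _ _ (lshift k.+1)
  (fun l : 'I_k => @rshift k.+1 k.+1 (widen_ord (leqnSn k) l))) => // [|i j].
  exact: lshift_inj.
move/hall_profile_edge_top; rewrite w2 voter_kind_lshift => /(_ isT) /esym.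
move/pref_top_voter_kind2 => /andP [le_kj lt_jk].
have lt_jk' : (j - k.+1 < k)%N by lia.
by apply/codomP; exists (Ordinal lt_jk'); apply: val_inj => /=; lia.
Qed.

Lemma hall_profile_nomatch_far (w : 'I_m.+3) :
  (3 <= w)%N -> ~ has_perfect_matching hall_profile w.
Proof.
move=> w3 [p /(_ (lshift k.+1 ord0)) /hall_profile_edge_top].
case: (nat_of_ord w) w3 => [|[|[|w']]] // _.
by case: (voter_kind _) (voter_kind _) => [] [] /(_ isT).
Qed.

Lemma hall_profile_match_a (w : 'I_m.+3) :
  has_perfect_matching hall_profile w -> w = 0 :> nat.
Proof.
case: w => [[|[|[|w]]] lt_w] pm //.
- by case: (hall_profile_nomatch_b (erefl : Ordinal lt_w = 1 :> nat) pm).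
- by case: (hall_profile_nomatch_x (erefl : Ordinal lt_w = 2 :> nat) pm).
- by case: (hall_profile_nomatch_far (isT : (3 <= Ordinal lt_w)%N) pm).
Qed.

End Profile.

Section Metric.
Variables (R : realType) (alpha : R).
Hypotheses (alpha_ge0 : 0 <= alpha) (alpha_le1 : alpha <= 1).

Inductive site := SiteA | SiteB | SiteJ | SiteX | SiteFar.

Definition site_dist (u v : site) : R :=
  match u, v with
  | SiteA, SiteA | SiteB, SiteB | SiteJ, SiteJ | SiteX, SiteX | SiteFar, SiteFar => 0
  | SiteFar, _ | _, SiteFar => 3
  | SiteA, SiteJ | SiteJ, SiteA | SiteB, SiteJ | SiteJ, SiteB => 1
  | SiteJ, SiteX | SiteX, SiteJ => alpha
  | _, _ => 1 + alpha
  end.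

Lemma site_dist_is_distance :
  [/\ forall u v, 0 <= site_dist u v, forall u v, site_dist u v = site_dist v u
    & forall u v w, site_dist u w <= site_dist u v + site_dist v w].
Proof.
split=> [u v|u v|u v w].
- by case: u; case: v => /=; move: alpha_ge0 alpha_le1; lra.
- by case: u; case: v => /=.
- by case: u; case: v; case: w => /=; move: alpha_ge0 alpha_le1; lra.
Qed.

Definition voter_site (t : pref_kind) : site :=
  match t with PrefBAX => SiteB | PrefXAB => SiteJ | _ => SiteA end.

Definition cand_site (c : nat) : site :=
  match c with 0 => SiteA | 1 => SiteB | 2 => SiteX | _ => SiteFar end.

Lemma pref_rank_site_dist_le t c c' : (pref_rank t c < pref_rank t c')%N ->
  site_dist (voter_site t) (cand_site c) <= site_dist (voter_site t) (cand_site c').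
Proof.
by case: t; case: c => [|[|[|c]]]; case: c' => [|[|[|c']]] => //= _;
  move: alpha_ge0 alpha_le1; lra.
Qed.

Lemma pref_top_site_dist_le t c c' : (pref_rank t c = 0)%N -> c <> c' ->
  site_dist (voter_site t) (cand_site c)
    <= alpha * site_dist (voter_site t) (cand_site c').
Proof.
case: t; case: c => [|[|[|c]]]; case: c' => [|[|[|c']]] => //= _ neq_cc';
  by [case: neq_cc' | move: alpha_ge0 alpha_le1; nra].
Qed.

Variables m k : nat.
Local Notation n := (k.+1 + k.+1)%N.

Definition point_site (x : point n m.+3) : site :=
  match x with inl i => voter_site (voter_kind i) | inr c => cand_site c end.

Definition hall_dist (x y : point n m.+3) : R := site_dist (point_site x) (point_site y).

Lemma hall_dist_admissible : admissible alpha (@hall_profile m k) hall_dist.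
Proof.
have [d_ge0 d_sym d_tri] := site_dist_is_distance.
split; first by split=> *; rewrite /hall_dist.
- move=> i c c'; rewrite /ranks_above !pref_permE; exact: pref_rank_site_dist_le.
- move=> i t c /eqP; rewrite pref_permE => top_t neq_ct.
  by apply: pref_top_site_dist_le => // /val_inj eq_tc; rewrite eq_tc eqxx in neq_ct.
Qed.

Definition cand_a : 'I_m.+3 := Ordinal (isT : (0 < m.+3)%N).
Definition cand_b : 'I_m.+3 := Ordinal (isT : (1 < m.+3)%N).

Lemma SC_hall_dist_a : SC hall_dist cand_a = k%:R * (2 + alpha).
Proof.
rewrite /SC /hall_dist /=.
rewrite (sum_voter_kind _ (fun t => site_dist (voter_site t) SiteA)) /=.
by rewrite -mulr_natl; lra.
Qed.

Lemma SC_hall_dist_b : SC hall_dist cand_b = k%:R + 2 * (1 + alpha).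
Proof.
rewrite /SC /hall_dist /=.
rewrite (sum_voter_kind _ (fun t => site_dist (voter_site t) SiteB)) /=.
by rewrite mul0rn; lra.
Qed.

End Metric.

Lemma hall_distortion_lower (R : realType) (alpha : R) m (f : rule m.+3) :
  0 <= alpha <= 1 -> (forall n (s : profile n m.+3), has_perfect_matching s (f n s)) ->
  forall eps : R, 0 < eps ->
  exists n (s : profile n m.+3) (d : point n m.+3 -> point n m.+3 -> R),
    admissible alpha s d /\ exists c, (2 + alpha - eps) * SC d c < SC d (f n s).
Proof.
move=> /andP [alpha_ge0 alpha_le1] f_pm eps eps_gt0.
pose k := Num.Def.archi_bound (12 / eps).
have k_large : 12 < k%:R * eps.
  by rewrite -ltr_pdivrMr // archi_boundP // divr_ge0 // ltW.
exists _, (@hall_profile m k), (@hall_dist R alpha m k).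
split; first exact: hall_dist_admissible.
exists (cand_b m).
have -> : f _ (@hall_profile m k) = cand_a m by apply/val_inj/hall_profile_match_a.
rewrite SC_hall_dist_a SC_hall_dist_b.
have : alpha * alpha <= alpha by rewrite ler_piMl.
have : 0 <= eps * alpha by rewrite mulr_ge0 // ltW.
lra.
Qed.

Theorem proposition5 (R : realType) (m : nat) (alpha : R) :
  (3 <= m)%N -> 0 <= alpha <= 1 ->
  forall f : rule m,
    (forall n (s : profile n m), has_perfect_matching s (f n s)) ->
    distortion_eq f alpha (2 + alpha).
Proof.
move=> m_ge3 alpha_01 f f_pm; have /andP [alpha_ge0 _] := alpha_01.
split=> [n s d d_adm | ].
  exact: (perfect_matching_SC_le alpha_ge0 d_adm (f_pm n s)).
case: m m_ge3 f f_pm => [|[|[|m]]] // _ f f_pm.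
exact: hall_distortion_lower.
Qed.
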